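(* Let $G$ and $H$ be connected graphs, not both complete, with $|V(G)|=s$, $|V(H)|=t$, $s\le t$ (and $t\ge 3$). Let $c_1=\max\{rx_3(G),rx_3(H)\}$ when both are defined. Then: (1) if $s=1$, then $rx_3(G\vee H)\le rx_3(H)+1$; (2) if $s=2$, then $rx_3(G\vee H)\le\min\{rc(H)+3,\ rx_3(K_{2,t})\}$; (3) if $3\le s\le t$, then $rx_3(G\vee H)\le\min\{c_1+1,\ rx_3(K_{s,t})\}$. In particular, if $s=t\ge 3$, then $rx_3(G\vee H)=rx_3(K_{s,t})=3$.
   Context: The join $G\vee H$ is obtained from the disjoint union of $G$ and $H$ by adding all edges joining every vertex of $G$ to every vertex of $H$. $K_{s,t}$ is the complete bipartite graph with parts of sizes $s,t$. An edge coloring may give adjacent edges the same color; a path (tree) is rainbow if its edges have pairwise distinct colors. $rc(H)$ is the minimum number of colors in an edge coloring of $H$ such that every two vertices are joined by a rainbow path. For a connected graph on at least $3$ vertices, $rx_3$ is the minimum number of colors in an edge coloring such that every set of $3$ vertices lies in some rainbow tree. *)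

From Stdlib Require Import ClassicalEpsilon.
From mathcomp Require Import all_boot.
Set Implicit Arguments. Unset Strict Implicit. Unset Printing Implicit Defensive.

Definition simple_graph (T : finType) (g : rel T) : Prop :=
  irreflexive g /\ symmetric g.

Definition connected (T : finType) (g : rel T) : Prop :=
  forall x y : T, connect g x y.

Definition complete (T : finType) (g : rel T) : Prop :=
  forall x y : T, x != y -> g x y.

Definition join (T1 T2 : finType) (g : rel T1) (h : rel T2) : rel (T1 + T2) :=
  fun u v => match u, v with
             | inl x, inl y => g x y
             | inr x, inr y => h x y
             | _, _ => true
             end.

Definition Kbip (s t : nat) : rel ('I_s + 'I_t) :=
  fun u v => match u, v with
             | inl _, inr _ | inr _, inl _ => true
             | _, _ => false
             end.

Definition coloring (T : finType) (g : rel T) (c : T -> T -> nat) (k : nat) : Prop :=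
  (forall x y, c x y = c y x) /\ (forall x y, g x y -> c x y < k).

Definition rainbow_path (T : finType) (g : rel T) (c : T -> T -> nat)
    (x y : T) (p : seq T) : Prop :=
  [/\ path g x p, last x p = y, uniq (x :: p) & uniq (pairmap c x p)].

(* (V, f) is a rainbow tree subgraph of g: f is a symmetric subrelation of g
   with all edges inside V, connected on V, with #|V|-1 (unordered) edges,
   and distinct edges receive distinct colors. *)
Definition rainbow_tree (T : finType) (g : rel T) (c : T -> T -> nat)
    (V : {set T}) (f : rel T) : Prop :=
  [/\ (forall x y, f x y -> g x y) /\ symmetric f,
      (forall x y, f x y -> (x \in V) && (y \in V)),
      (forall x y, x \in V -> y \in V -> connect f x y),
      #|[set e : T * T | f e.1 e.2]| = 2 * (#|V| - 1)
    & (forall x y u v, f x y -> f u v -> c x y = c u v ->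
         (x = u /\ y = v) \/ (x = v /\ y = u))].

Definition rc_ok (T : finType) (g : rel T) (k : nat) : Prop :=
  exists c, coloring g c k /\
    forall x y : T, x != y -> exists p, rainbow_path g c x y p.

Definition rx3_ok (T : finType) (g : rel T) (k : nat) : Prop :=
  exists c, coloring g c k /\
    forall S : {set T}, #|S| = 3 ->
      exists (V : {set T}) (f : rel T), S \subset V /\ rainbow_tree g c V f.

(* Least natural number satisfying a Prop predicate (0 if none). *)
Definition pbool (P : Prop) : bool :=
  if excluded_middle_informative P then true else false.

Lemma ex_pbool (P : nat -> Prop) : (exists n, P n) -> exists n, pbool (P n).
Proof.
case=> n Pn; exists n; rewrite /pbool.
by case: (excluded_middle_informative (P n)).
Qed.

Definition least_nat (P : nat -> Prop) : nat :=
  match excluded_middle_informative (exists n, P n) with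
  | left h => ex_minn (ex_pbool h)
  | right _ => 0
  end.

Definition rc (T : finType) (g : rel T) : nat := least_nat (rc_ok g).
Definition rx3 (T : finType) (g : rel T) : nat := least_nat (rx3_ok g).
Arguments Kbip s t : clear implicits.

From Stdlib Require Import ClassicalEpsilon.
From mathcomp Require Import all_boot zify.
Set Implicit Arguments. Unset Strict Implicit. Unset Printing Implicit Defensive.

(* Then the upper bounds are explicit colourings of the join: for s = 1 and
   s >= 3 the colourings of G and H plus one new colour on all cross edges;
   for s = 2 a rainbow-path colouring of H plus three new colours; and
   rx3(G \/ H) <= rx3(K_{s,t}) since K_{s,t} is a spanning subgraph of the
   join.  For s = t >= 3 an explicit 3-colouring of K_{s,s} (compare the two
   indices of an edge) gives the upper bound 3, and the lower bound 3 holds on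
   every graph with at least 6 vertices: a rainbow tree with <= 2 colours has
   <= 3 vertices, so it would have to span a monochromatic triangle given by
   Ramsey's theorem R(3,3) = 6, which is impossible. *)

Lemma least_nat_le (P : nat -> Prop) k : P k -> least_nat P <= k.
Proof.
move=> Pk; rewrite /least_nat; case: excluded_middle_informative => [ex|[]]; last by exists k.
case: ex_minnP => m _; apply; rewrite /pbool.
by case: excluded_middle_informative.
Qed.

Lemma least_natP (P : nat -> Prop) : (exists n, P n) -> P (least_nat P).
Proof.
move=> ex; rewrite /least_nat; case: excluded_middle_informative => [{}ex|//].
by case: ex_minnP => m; rewrite /pbool; case: excluded_middle_informative.
Qed.

Lemma cards3 (T : finType) (a b d : T) : a != b -> a != d -> b != d -> #|[set a; b; d]| = 3.
Proof. by move=> ab ad bd; rewrite -setUA cardsU1 cards2 !inE bd (negbTE ab) (negbTE ad). Qed.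

Lemma pick3 (T : finType) (X : {set T}) : 3 <= #|X| ->
  exists x y z, [/\ x \in X, y \in X, z \in X & [/\ x != y, x != z & y != z]].
Proof.
have mX u : (u \in X) = (u \in enum X) by rewrite mem_enum.
rewrite cardE; have := enum_uniq (mem X).
case: (enum X) mX => [|x [|y [|z s]]] //= mX.
rewrite !inE !negb_or => /andP[/andP[xy /andP[xz _]] /andP[/andP[yz _] _]] _.
by exists x, y, z; rewrite !mX !inE !eqxx ?orbT.
Qed.

Lemma set3_elements (T : finType) (X : {set T}) : #|X| = 3 ->
  exists x y z, [/\ x != y, x != z, y != z & X = [set x; y; z]].
Proof.
move=> X3; have [x [y [z [xX yX zX [xy xz yz]]]]] := pick3 (eq_leq (esym X3)).
exists x, y, z; split=> //; apply/eqP; rewrite eq_sym eqEcard cards3 // X3 leqnn andbT.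
by apply/subsetP=> u; rewrite !inE -orbA => /or3P[]/eqP->.
Qed.

Lemma inl_eq_inr (T1 T2 : eqType) (x : T1) (y : T2) : (inl x == inr y :> T1 + T2) = false.
Proof. by []. Qed.

Lemma inr_eq_inl (T1 T2 : eqType) (x : T1) (y : T2) : (inr y == inl x :> T1 + T2) = false.
Proof. by []. Qed.

Ltac simpl_sum_eq := rewrite ?inl_eq_inr ?inr_eq_inl ?(inj_eq inl_inj) ?(inj_eq inr_inj).

Ltac subset_explicit :=
  by rewrite ?imsetU ?imsetU1 !imset_set1 !subUset !sub1set !inE !eqxx ?orbT.

Lemma sum_set3_cases (T1 T2 : finType) (P : {set T1 + T2} -> Prop) :
  (forall A : {set T1}, #|A| = 3 -> P (inl @: A)) ->
  (forall (A : {set T1}) (z : T2), #|A| = 2 -> P (inr z |: inl @: A)) ->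
  (forall (x : T1) (B : {set T2}), #|B| = 2 -> P (inl x |: inr @: B)) ->
  (forall B : {set T2}, #|B| = 3 -> P (inr @: B)) ->
  forall S : {set T1 + T2}, #|S| = 3 -> P S.
Proof.
move=> LLL LLR LRR RRR S S3.
pose A := [set x | inl x \in S]; pose B := [set y | inr y \in S].
have [lI rI] : injective (@inl T1 T2) /\ injective (@inr T1 T2) by split=> ? ? [].
have inl_inr x (D : {set T2}) : (inl x \in inr @: D) = false by apply/imsetP=> -[].
have inr_inl y (D : {set T1}) : (inr y \in inl @: D) = false by apply/imsetP=> -[].
have eS : S = inl @: A :|: inr @: B.
  by apply/setP=> -[x|y]; rewrite in_setU ?inl_inr ?inr_inl !mem_imset // !inE ?orbF.
have cAB : #|A| + #|B| = 3.
  rewrite -S3 eS cardsU !card_imset //.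
  suff -> : inl @: A :&: inr @: B = set0 by rewrite cards0 subn0.
  by apply/setP=> -[x|y]; rewrite !inE ?inl_inr ?inr_inl ?andbF.
move: cAB; case eA: #|A| => [|[|[|[|n]]]] cAB; last by lia.
- have /eqP A0 : A == set0 by rewrite -cards_eq0 eA.
  by rewrite eS A0 imset0 set0U; apply: RRR; lia.
- have /cards1P[x A1] : #|A| == 1 by rewrite eA.
  by rewrite eS A1 imset_set1; apply: LRR; lia.
- have /cards1P[z eB] : #|B| == 1 by lia.
  by rewrite eS eB imset_set1 setUC; apply: LLR.
- have /eqP eB : B == set0 by rewrite -cards_eq0; lia.
  by rewrite eS eB imset0 setU0; apply: LLL.
Qed.

Lemma ord_enum_sorted n (A : {set 'I_n}) : sorted (fun i j : 'I_n => i < j) (enum A).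
Proof.
rewrite /enum_mem -enumT; apply: sorted_filter; first by move=> ? ? ?; apply: ltn_trans.
by have := iota_ltn_sorted 0 n; rewrite -val_enum_ord sorted_map.
Qed.

Lemma ord_set2 n (A : {set 'I_n}) : #|A| = 2 -> exists i j : 'I_n, i < j /\ A = [set i; j].
Proof.
rewrite cardE; have := ord_enum_sorted A; have := set_enum A.
case: (enum A) => [|i [|j [|? ?]]] //= <- /andP[ij _] _; exists i, j; split=> //.
by apply/setP=> x; rewrite !inE.
Qed.

Lemma ord_set3 n (A : {set 'I_n}) : #|A| = 3 ->
  exists i j l : 'I_n, [/\ i < j, j < l & A = [set i; j; l]].
Proof.
rewrite cardE; have := ord_enum_sorted A; have := set_enum A.
case: (enum A) => [|i [|j [|l [|? ?]]]] //= <- /and3P[ij jl _] _; exists i, j, l; split=> //.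
by apply/setP=> x; rewrite !inE orbA.
Qed.

(* A [colored_tree] is a rainbow tree on a nonempty vertex
   set whose colours all satisfy K; K records the colours already used, so
   that the tree can be extended by edges of fresh colours. *)

Section RainbowTrees.
Variables (T : finType) (g : rel T) (c : T -> T -> nat).

Definition covered (A : {set T}) : Prop :=
  exists (V : {set T}) (f : rel T), A \subset V /\ rainbow_tree g c V f.

Lemma covered_sub (A B : {set T}) : A \subset B -> covered B -> covered A.
Proof. by move=> sAB [V [f [sBV t]]]; exists V, f; split=> //; apply: subset_trans sBV. Qed.

Definition colored_tree (V : {set T}) (f : rel T) (K : pred nat) : Prop :=
  [/\ rainbow_tree g c V f, 0 < #|V| & forall x y, f x y -> K (c x y)].

Lemma colored_tree_weaken (V : {set T}) (f : rel T) (K K' : pred nat) :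
  (forall n, K n -> K' n) -> colored_tree V f K -> colored_tree V f K'.
Proof. by move=> KK' [t V0 fK]; split=> // x y /fK /KK'. Qed.

Lemma colored_tree_covered (V : {set T}) (f : rel T) (K : pred nat) (A : {set T}) :
  A \subset V -> colored_tree V f K -> covered A.
Proof. by move=> sAV [t _ _]; exists V, f. Qed.

Lemma covered_colored k (A : {set T}) : coloring g c k -> covered A -> A != set0 ->
  exists (V : {set T}) (f : rel T), A \subset V /\ colored_tree V f (fun n => n < k).
Proof.
move=> [_ ck] [V [f [sAV t]]] /set0Pn[a aA]; exists V, f; split=> //; split=> //.
  by rewrite card_gt0; apply/set0Pn; exists a; apply: (subsetP sAV).
by move=> x y fxy; case: t => [[fg _] _ _ _ _]; apply/ck/fg.
Qed.

Lemma colored_tree1 (x : T) (K : pred nat) : colored_tree [set x] (fun _ _ => false) K.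
Proof.
split; rewrite ?cards1 //; split=> //.
- by move=> u v; rewrite !inE => /eqP -> /eqP ->; apply: connect0.
- by rewrite cards1; apply/eqP; rewrite cards_eq0; apply/eqP/setP=> e; rewrite !inE.
Qed.

Definition add_edge (f : rel T) (x z : T) : rel T :=
  fun u v => f u v || ((u == x) && (v == z)) || ((u == z) && (v == x)).

Lemma add_edgeP (f : rel T) x z u v :
  add_edge f x z u v -> [\/ f u v, u = x /\ v = z | u = z /\ v = x].
Proof.
by rewrite /add_edge => /orP[/orP[?|/andP[/eqP-> /eqP->]]|/andP[/eqP-> /eqP->]];
  [apply: Or31|apply: Or32|apply: Or33].
Qed.

Lemma card_add_edge (f : rel T) x z : x != z -> (forall u, f u z = false /\ f z u = false) ->
  #|[set e : T * T | add_edge f x z e.1 e.2]| = #|[set e : T * T | f e.1 e.2]|.+2.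
Proof.
move=> xz fz; have -> : [set e : T * T | add_edge f x z e.1 e.2] =
    (x, z) |: ((z, x) |: [set e : T * T | f e.1 e.2]).
  apply/setP=> -[u v]; rewrite !inE /add_edge /= !xpair_eqE.
  by rewrite -!orbA orbC -!orbA; congr (_ || _); rewrite orbC.
by rewrite !cardsU1 !inE /= !xpair_eqE (negbTE xz) /= (fz x).1 (fz x).2.
Qed.

Hypotheses (gsym : symmetric g) (csym : forall x y, c x y = c y x).

Lemma colored_tree_leaf (V : {set T}) (f : rel T) (K : pred nat) (x z : T) :
  colored_tree V f K -> x \in V -> z \notin V -> g x z -> ~~ K (c x z) ->
  colored_tree (z |: V) (add_edge f x z) (fun n => (n == c x z) || K n).
Proof.
move=> [[[fg fsym] fV fcon fcard finj] V0 fK] xV zV gxz Kxz.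
have xz : x != z by apply: contraNneq zV => <-.
have fz u : f u z = false /\ f z u = false.
  by split; apply/negP=> /fV /andP[]; rewrite (negbTE zV) ?andbF.
have conn_sub u v : connect f u v -> connect (add_edge f x z) u v.
  by apply: connect_sub => ? ? fuv; apply: connect1; rewrite /add_edge fuv.
have cxz : connect (add_edge f x z) x z by apply: connect1; rewrite /add_edge !eqxx orbT.
have czx : connect (add_edge f x z) z x by apply: connect1; rewrite /add_edge !eqxx orbT.
split; last first.
- by move=> u v /add_edgeP[/fK->|[-> ->]|[-> ->]]; rewrite ?orbT // csym eqxx.
- by rewrite cardsU1 zV.
split.
- split=> u v.
    by move=> /add_edgeP[/fg|[-> ->]|[-> ->]] //; rewrite gsym.
  by rewrite /add_edge fsym -!orbA; congr (_ || _); rewrite orbC !(andbC (u == _)).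
- by move=> u v /add_edgeP[/fV /andP[uV vV]|[-> ->]|[-> ->]]; rewrite !inE ?uV ?vV ?xV ?eqxx ?orbT.
- move=> u v; rewrite !inE => /predU1P[->|uV] /predU1P[->|vV].
  + exact: connect0.
  + by apply: connect_trans czx (conn_sub _ _ (fcon _ _ xV vV)).
  + by apply: connect_trans (conn_sub _ _ (fcon _ _ uV xV)) cxz.
  + exact: conn_sub (fcon _ _ uV vV).
- by rewrite card_add_edge // fcard cardsU1 zV; lia.
- have fresh u v : f u v -> c u v != c x z by move=> /fK; apply: contraTneq => ->.
  move=> x1 y1 u v /add_edgeP[f1|[-> ->]|[-> ->]] /add_edgeP[f2|[-> ->]|[-> ->]];
    rewrite ?(csym z x); try by [left|right]; first exact: finj.
  + by move=> e; have := fresh _ _ f1; rewrite e eqxx.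
  + by move=> e; have := fresh _ _ f1; rewrite e eqxx.
  + by move=> e; have := fresh _ _ f2; rewrite -e eqxx.
  + by move=> e; have := fresh _ _ f2; rewrite -e eqxx.
Qed.

Lemma covered_leaf (V : {set T}) (f : rel T) (K : pred nat) (B : {set T}) (x z : T) :
  B \subset V -> colored_tree V f K -> x \in V -> z \notin V -> g x z -> ~~ K (c x z) ->
  covered (z |: B).
Proof.
move=> sBV t xV zV gxz Kxz; apply: colored_tree_covered (colored_tree_leaf t xV zV gxz Kxz).
exact: setUS.
Qed.

Fixpoint leaves_ok (V : {set T}) (es : seq (T * T)) : bool :=
  if es is (x, z) :: es' then [&& x \in V, z \notin V, g x z & leaves_ok (z |: V) es']
  else true.

Definition leaf_colors (es : seq (T * T)) : seq nat := [seq c e.1 e.2 | e <- es].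

Lemma colored_tree_grow (V : {set T}) (f : rel T) (K : pred nat) (es : seq (T * T)) :
  colored_tree V f K -> leaves_ok V es -> uniq (leaf_colors es) ->
  all (predC K) (leaf_colors es) ->
  exists (V' : {set T}) (f' : rel T), [/\ V \subset V', {subset map snd es <= V'} &
    colored_tree V' f' (fun n => K n || (n \in leaf_colors es))].
Proof.
elim: es V f K => [|[x z] es IH] V f K t /=.
  by move=> _ _ _; exists V, f; split=> //; apply: colored_tree_weaken t => n ->.
case/and4P=> xV zV gxz ok /andP[fresh u] /andP[Kxz Kes].
have t1 := colored_tree_leaf t xV zV gxz Kxz.
have fresh1 : all (predC (fun n => (n == c x z) || K n)) (leaf_colors es).
  apply/allP=> n nes; rewrite /= negb_or; apply/andP; split; last exact: (allP Kes).
  by apply: contraNneq fresh => <-.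
have [V' [f' [sV' sub t']]] := IH _ _ _ t1 ok u fresh1.
exists V', f'; split.
- by apply: subset_trans sV'; apply: subsetUr.
- by move=> y; rewrite inE => /predU1P[->|/sub//]; apply: (subsetP sV'); rewrite setU11.
- apply: colored_tree_weaken t' => n; rewrite inE.
  by case/orP=> [/orP[->|->]|->]; rewrite ?orbT.
Qed.

Lemma covered_leaves (r : T) (es : seq (T * T)) :
  leaves_ok [set r] es -> uniq (leaf_colors es) -> covered (r |: [set z in map snd es]).
Proof.
move=> ok u; have fresh : all (predC pred0) (leaf_colors es) by apply/allP.
have [V [f [sV sub t]]] := colored_tree_grow (colored_tree1 r pred0) ok u fresh.
apply: colored_tree_covered t; apply/subsetP=> y; rewrite !inE.
by case/predU1P=> [->|/sub//]; apply: (subsetP sV); rewrite inE.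
Qed.

(* A rainbow path is a tree grown from its first vertex. *)
Lemma leaves_ok_path (V : {set T}) (x : T) (p : seq T) :
  x \in V -> path g x p -> uniq p -> all (fun z => z \notin V) p -> leaves_ok V (zip (x :: p) p).
Proof.
elim: p x V => [|y p IH] x V //= xV /andP[gxy pp] /andP[yp up] /andP[yV pV].
rewrite xV yV gxy IH ?setU11 //; apply/allP=> z zp; rewrite !inE negb_or (allP pV z zp) andbT.
by apply: contraNneq yp => <-.
Qed.

Lemma leaf_colors_path (x : T) (p : seq T) : leaf_colors (zip (x :: p) p) = pairmap c x p.
Proof. by elim: p x => [|y p IH] x //=; rewrite IH. Qed.

Lemma rainbow_path_covered (x y : T) (p : seq T) : rainbow_path g c x y p -> covered [set x; y].
Proof.
case=> pp <- /andP[xp up] u; have: leaves_ok [set x] (zip (x :: p) p).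
  apply: leaves_ok_path; rewrite ?inE //.
  by apply/allP=> z zp; rewrite inE; apply: contraNneq xp => <-.
move/covered_leaves; rewrite leaf_colors_path => /(_ u); apply: covered_sub.
rewrite (_ : map snd _ = p); last exact: unzip2_zip.
apply/subsetP=> z; rewrite !inE => /orP[/eqP->|/eqP->]; first by rewrite eqxx.
by have := mem_last x p; rewrite inE.
Qed.
End RainbowTrees.

Section TreeImage.
Variables (T T' : finType) (g : rel T) (g' : rel T').
Variables (c : T -> T -> nat) (c' : T' -> T' -> nat) (m : T -> T') (tau : nat -> nat).
Hypotheses (m_inj : injective m) (m_hom : forall x y, g x y -> g' (m x) (m y)).
Hypothesis m_col : forall x y, g x y -> c' (m x) (m y) = tau (c x y).
Hypothesis tau_inj : forall x y u v, g x y -> g u v -> tau (c x y) = tau (c u v) -> c x y = c u v.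

Definition image_rel (f : rel T) : rel T' :=
  fun u v => [exists x, exists y, (u == m x) && (v == m y) && f x y].

Lemma image_relP (f : rel T) u v :
  reflect (exists x y, [/\ u = m x, v = m y & f x y]) (image_rel f u v).
Proof.
apply: (iffP existsP) => [[x /existsP[y /andP[/andP[/eqP-> /eqP->] fxy]]]|[x [y [-> -> fxy]]]].
  by exists x, y.
by exists x; apply/existsP; exists y; rewrite !eqxx fxy.
Qed.

Lemma rainbow_tree_image (V : {set T}) (f : rel T) :
  rainbow_tree g c V f -> rainbow_tree g' c' (m @: V) (image_rel f).
Proof.
move=> [[fg fsym] fV fcon fcard finj]; split.
- split=> u v; first by move=> /image_relP[x [y [-> -> /fg/m_hom]]].
  by apply/image_relP/image_relP => -[x [y [-> -> fxy]]]; exists y, x; rewrite fsym.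
- by move=> u v /image_relP[x [y [-> -> /fV/andP[xV yV]]]]; rewrite !imset_f.
- move=> u v /imsetP[x xV ->] /imsetP[y yV ->].
  have /connectP[p pp ->] := fcon _ _ xV yV.
  apply/connectP; exists (map m p); last by rewrite last_map.
  by apply: homo_path pp => a b fab; apply/image_relP; exists a, b.
- have -> : [set e : T' * T' | image_rel f e.1 e.2] =
            (fun e : T * T => (m e.1, m e.2)) @: [set e : T * T | f e.1 e.2].
    apply/setP=> -[u v]; rewrite !inE /=; apply/image_relP/imsetP.
      by move=> [x [y [-> -> fxy]]]; exists (x, y); rewrite ?inE.
    by move=> [[x y]]; rewrite inE /= => fxy [-> ->]; exists x, y.
  by rewrite card_imset ?fcard ?card_imset // => -[a b] [a' b'] /= [/m_inj-> /m_inj->].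
- move=> u v u' v' /image_relP[x [y [-> -> fxy]]] /image_relP[x' [y' [-> -> fxy']]].
  rewrite !m_col ?fg // => /(tau_inj (fg _ _ fxy) (fg _ _ fxy')).
  by move=> /(finj _ _ _ _ fxy fxy') [[-> ->]|[-> ->]]; [left|right].
Qed.

Lemma colored_tree_image (V : {set T}) (f : rel T) (K K' : pred nat) :
  (forall n, K n -> K' (tau n)) -> colored_tree g c V f K ->
  colored_tree g' c' (m @: V) (image_rel f) K'.
Proof.
move=> KK' [t V0 fK]; split; first exact: rainbow_tree_image.
  by rewrite card_imset.
move=> u v /image_relP[x [y [-> -> fxy]]].
rewrite m_col; last by case: t => [[fg _] _ _ _ _]; apply: fg.
exact/KK'/fK.
Qed.

Lemma covered_image (A : {set T}) : covered g c A -> covered g' c' (m @: A).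
Proof.
move=> [V [f [sAV t]]]; exists (m @: V), (image_rel f).
by split; [apply: imsetS|apply: rainbow_tree_image].
Qed.
End TreeImage.

(* rx3 and rc are attained on connected graphs: colour each unordered pair
   {x, y} by its own number.  Then every tree and every path with distinct
   vertices is rainbow, and a tree can absorb any vertex by walking along a
   path towards it. *)

Section PairColoring.
Variables (T : finType) (g : rel T).

Definition pair_color (x y : T) : nat := enum_rank [set x; y].

Lemma pair_color_sym x y : pair_color x y = pair_color y x.
Proof. by rewrite /pair_color setUC. Qed.

Lemma pair_color_inj x y u v : pair_color x y = pair_color u v ->
  (x = u /\ y = v) \/ (x = v /\ y = u).
Proof.
move=> /val_inj /enum_rank_inj e.
have: [/\ x \in [set u; v], y \in [set u; v], u \in [set x; y] & v \in [set x; y]].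
  by split; [rewrite -e|rewrite -e|rewrite e|rewrite e]; rewrite !inE eqxx ?orbT.
by rewrite !inE => -[/orP[]/eqP-> /orP[]/eqP-> /orP[]/eqP ? /orP[]/eqP ?]; subst; auto.
Qed.

Lemma pair_coloring : coloring g pair_color #|{set T}|.
Proof. by split=> [x y|x y _]; [apply: pair_color_sym|apply: ltn_ord]. Qed.

(* The colours of pairs inside V: exactly the colours a tree on V can use. *)
Definition used_colors (V : {set T}) : pred nat :=
  fun n => [exists u in V, exists v in V, n == pair_color u v].

Lemma used_colors_sub (V V' : {set T}) n : V \subset V' -> used_colors V n -> used_colors V' n.
Proof.
move=> sVV /existsP[u /andP[uV /existsP[v /andP[vV e]]]].
apply/existsP; exists u; rewrite (subsetP sVV) //=.
by apply/existsP; exists v; rewrite (subsetP sVV).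
Qed.

Hypothesis gsym : symmetric g.

Lemma colored_tree_attach (V : {set T}) (f : rel T) (z : T) (p : seq T) :
  path g z p -> last z p \in V -> colored_tree g pair_color V f (used_colors V) ->
  exists (V' : {set T}) (f' : rel T),
    [/\ z \in V', V \subset V' & colored_tree g pair_color V' f' (used_colors V')].
Proof.
elim: p z V f => [|w p IH] z V f /=; first by move=> _ zV t; exists V, f.
case/andP=> gzw pp lV t; have [V' [f' [wV' sVV' t']]] := IH _ _ _ pp lV t.
have [zV'|zV'] := boolP (z \in V'); first by exists V', f'.
exists (z |: V'), (add_edge f' w z); split; rewrite ?setU11 ?(subset_trans sVV' (subsetUr _ _)) //.
have fresh : ~~ used_colors V' (pair_color w z).
  apply/existsP=> -[u /andP[uV /existsP[v /andP[vV /eqP /pair_color_inj e]]]].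
  by case: e => -[? ?]; subst; rewrite ?uV ?vV in zV'.
apply: colored_tree_weaken (colored_tree_leaf gsym pair_color_sym t' wV' zV' _ fresh).
- move=> n /orP[/eqP->|]; last by apply: used_colors_sub; apply: subsetUr.
  rewrite /used_colors; apply/existsP; exists w; rewrite !inE wV' orbT /=.
  by apply/existsP; exists z; rewrite !inE !eqxx.
- by rewrite gsym.
Qed.

Lemma pair_coloring_covered (S : {set T}) (x : T) : connected g -> covered g pair_color S.
Proof.
move=> gc; suff [V [f [_ sV t]]] : exists (V : {set T}) (f : rel T),
    [/\ x \in V, {subset enum S <= V} & colored_tree g pair_color V f (used_colors V)].
  by apply: colored_tree_covered t; apply/subsetP=> y yS; apply: sV; rewrite mem_enum.
elim: (enum S) => [|y s [V [f [xV sV t]]]].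
  by exists [set x], (fun _ _ => false); split; rewrite ?inE //; apply: colored_tree1.
have /connectP[p pp lp] := gc y x; rewrite lp in xV.
have [V' [f' [yV' sVV' t']]] := colored_tree_attach pp xV t.
exists V', f'; split=> //; first by rewrite lp (subsetP sVV').
by move=> z; rewrite inE => /predU1P[->//|/sV/(subsetP sVV')].
Qed.
End PairColoring.
Arguments pair_color {T}.

Lemma pairmap_mem (T : eqType) (c : T -> T -> nat) (x : T) (p : seq T) n :
  n \in pairmap c x p -> exists u v, [/\ u \in x :: p, v \in x :: p & n = c u v].
Proof.
elim: p x => [|y p IH] x //=; rewrite inE => /predU1P[->|/IH[u [v [up vp ->]]]].
  by exists x, y; rewrite !inE !eqxx orbT.
by exists u, v; split; rewrite // inE ?up ?vp orbT.
Qed.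

Lemma pair_coloring_rainbow_path (T : finType) (g : rel T) (x y : T) :
  connected g -> exists p, rainbow_path g pair_color x y p.
Proof.
move=> gc; have /connectP[p pp ->] := gc x y.
have [q qp uq _] := shortenP pp; exists q; split=> //.
elim: q x qp uq {pp} => [|w q IH] x //= /andP[_ qp] /andP[xq uq].
rewrite IH //= andbT; apply/negP=> /pairmap_mem[u [v [uq' vq' /pair_color_inj]]].
by case=> -[? ?]; subst; rewrite ?uq' ?vq' in xq.
Qed.

Lemma rx3_exists (T : finType) (g : rel T) : simple_graph g -> connected g -> exists k, rx3_ok g k.
Proof.
move=> [_ gsym] gc; exists #|{set T}|, pair_color; split; first exact: pair_coloring.
move=> S S3; have /set0Pn[x _] : S != set0 by rewrite -card_gt0 S3.
exact: pair_coloring_covered gsym S x gc.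
Qed.

Lemma rc_exists (T : finType) (g : rel T) : connected g -> exists k, rc_ok g k.
Proof.
move=> gc; exists #|{set T}|, pair_color; split; first exact: pair_coloring.
by move=> x y _; apply: pair_coloring_rainbow_path.
Qed.

(* The join.  Cross edges are all present, so a tree of one side extends to
   a vertex of the other side by a single edge of a new colour. *)

Lemma coloring_le (T : finType) (g : rel T) (c : T -> T -> nat) k k' :
  k <= k' -> coloring g c k -> coloring g c k'.
Proof. by move=> kk' [cs ck]; split=> // x y /ck /leq_trans; apply. Qed.

Lemma small_sets_covered (T : finType) (g : rel T) (c : T -> T -> nat) :
  3 <= #|T| -> (forall S : {set T}, #|S| = 3 -> covered g c S) ->
  forall A : {set T}, 1 < #|A| -> #|A| <= 3 -> covered g c A.
Proof.
move=> T3 cov A A1 A3; have [/cov//|A2] := eqVneq #|A| 3.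
have /set0Pn[w] : ~: A != set0 by rewrite -card_gt0; have := cardsC A; lia.
rewrite inE => wA; apply: covered_sub (subsetUr [set w] A) (cov _ _).
by rewrite cardsU1 wA; lia.
Qed.

Lemma join_sym (T1 T2 : finType) (g : rel T1) (h : rel T2) :
  symmetric g -> symmetric h -> symmetric (join g h).
Proof. by move=> gs hs [x|x] [y|y] /=. Qed.

Lemma join_simple (T1 T2 : finType) (g : rel T1) (h : rel T2) :
  simple_graph g -> simple_graph h -> simple_graph (join g h).
Proof. by move=> [gi gs] [hi hs]; split; [case=> x /=; [apply: gi|apply: hi]|apply: join_sym]. Qed.

Section JoinColoring.
Variables (T1 T2 : finType) (g : rel T1) (h : rel T2).
Variables (cg : T1 -> T1 -> nat) (ch : T2 -> T2 -> nat) (k : nat).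
Hypotheses (gsym : symmetric g) (hsym : symmetric h).
Hypotheses (colg : coloring g cg k) (colh : coloring h ch k).
Hypothesis covg : forall A : {set T1}, 1 < #|A| -> #|A| <= 3 -> covered g cg A.
Hypothesis covh : forall B : {set T2}, 1 < #|B| -> #|B| <= 3 -> covered h ch B.

Definition join_color (u v : T1 + T2) : nat :=
  match u, v with
  | inl x, inl y => cg x y
  | inr x, inr y => ch x y
  | _, _ => k
  end.

Lemma join_color_sym u v : join_color u v = join_color v u.
Proof. by case: colg colh => [cgs _] [chs _]; case: u v => x [y|y] /=. Qed.

Lemma join_coloring : coloring (join g h) join_color k.+1.
Proof.
split; first exact: join_color_sym.
by case: colg colh => [_ cgk] [_ chk] [x|x] [y|y] //= /[dup] e; [move/cgk|move/chk]; lia.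
Qed.

Lemma join_left_tree (A : {set T1}) : 1 < #|A| <= 3 ->
  exists (V : {set T1}) (f : rel (T1 + T2)),
    A \subset V /\ colored_tree (join g h) join_color (inl @: V) f (fun n => n < k).
Proof.
move=> /andP[A1 A3]; have nA : A != set0 by rewrite -card_gt0; lia.
have [V [f [sAV t]]] := covered_colored colg (covg A1 A3) nA.
exists V, (image_rel inl f); split=> //.
by apply: (colored_tree_image (tau := id) inl_inj _ _ _ _ t).
Qed.

Lemma join_right_tree (B : {set T2}) : 1 < #|B| <= 3 ->
  exists (V : {set T2}) (f : rel (T1 + T2)),
    B \subset V /\ colored_tree (join g h) join_color (inr @: V) f (fun n => n < k).
Proof.
move=> /andP[B1 B3]; have nB : B != set0 by rewrite -card_gt0; lia.
have [V [f [sBV t]]] := covered_colored colh (covh B1 B3) nB.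
exists V, (image_rel inr f); split=> //.
by apply: (colored_tree_image (tau := id) inr_inj _ _ _ _ t).
Qed.

Lemma join_rx3 : rx3_ok (join g h) k.+1.
Proof.
exists join_color; split; first exact: join_coloring.
have Jsym := join_sym gsym hsym.
apply: (sum_set3_cases (P := covered (join g h) join_color)) => [A A3|A z A2|x B B2|B B3].
- have [|V [f [sAV t]]] := join_left_tree (A := A); first by rewrite A3.
  exact: colored_tree_covered (imsetS _ sAV) t.
- have [|V [f [sAV t]]] := join_left_tree (A := A); first by rewrite A2.
  have /set0Pn[x xA] : A != set0 by rewrite -card_gt0 A2.
  apply: (covered_leaf Jsym join_color_sym (imsetS inl sAV) t (imset_f inl (subsetP sAV _ xA))).
  - by apply/imsetP=> -[].
  - by [].
  - by rewrite /= ltnn.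
- have [|V [f [sBV t]]] := join_right_tree (B := B); first by rewrite B2.
  have /set0Pn[y yB] : B != set0 by rewrite -card_gt0 B2.
  apply: (covered_leaf Jsym join_color_sym (imsetS inr sBV) t (imset_f inr (subsetP sBV _ yB))).
  - by apply/imsetP=> -[].
  - by [].
  - by rewrite /= ltnn.
- have [|V [f [sBV t]]] := join_right_tree (B := B); first by rewrite B3.
  exact: colored_tree_covered (imsetS _ sBV) t.
Qed.
End JoinColoring.

Lemma join_rx3_single (T1 T2 : finType) (g : rel T1) (h : rel T2) k :
  simple_graph g -> simple_graph h -> #|T1| = 1 -> 3 <= #|T2| ->
  rx3_ok h k -> rx3_ok (join g h) k.+1.
Proof.
move=> [girr gsym] [_ hsym] T11 T23 [ch [colh covh]].
have one (x y : T1) : x = y.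
  by apply/eqP; have := max_card [set x; y]; rewrite cards2 T11; case: eqP.
apply: (join_rx3 (cg := fun _ _ => 0)) gsym hsym _ colh _ (small_sets_covered T23 covh).
- by split=> // x y; rewrite (one x y) girr.
- by move=> A A1; have := max_card A; lia.
Qed.

Lemma join_rx3_max (T1 T2 : finType) (g : rel T1) (h : rel T2) kg kh :
  simple_graph g -> simple_graph h -> 3 <= #|T1| -> 3 <= #|T2| ->
  rx3_ok g kg -> rx3_ok h kh -> rx3_ok (join g h) (maxn kg kh).+1.
Proof.
move=> [_ gsym] [_ hsym] T13 T23 [cg [colg covg]] [ch [colh covh]].
apply: (join_rx3 gsym hsym (coloring_le (leq_maxl kg kh) colg) (coloring_le (leq_maxr kg kh) colh)).
- exact: small_sets_covered T13 covg.
- exact: small_sets_covered T23 covh.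
Qed.

Section JoinWithEdge.
Variables (T1 T2 : finType) (g : rel T1) (h : rel T2) (ch : T2 -> T2 -> nat) (k : nat) (a b : T1).
Hypotheses (gsym : symmetric g) (hsym : symmetric h) (ab : a != b) (gba : g b a).
Hypotheses (T12 : #|T1| = 2) (colh : coloring h ch k).
Hypothesis paths : forall x y : T2, x != y -> exists p, rainbow_path h ch x y p.

Definition edge_join_color (u v : T1 + T2) : nat :=
  match u, v with
  | inl _, inl _ => k.+2
  | inl p, inr _ | inr _, inl p => k + (p != a)
  | inr x, inr y => ch x y
  end.

Lemma edge_join_color_sym u v : edge_join_color u v = edge_join_color v u.
Proof. by case: colh => [chs _]; case: u v => x [y|y] /=. Qed.

Lemma edge_join_coloring : coloring (join g h) edge_join_color (k + 3).
Proof.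
split; first exact: edge_join_color_sym.
by case: colh => [_ chk] [x|x] [y|y] //= e; [lia|lia|lia|move: (chk _ _ e); lia].
Qed.

Lemma two_vertices (A : {set T1}) : #|A| = 2 -> A = [set a; b].
Proof.
suff all2 (B : {set T1}) : #|B| = 2 -> B = setT.
  by move=> /all2 ->; symmetry; apply: all2; rewrite cards2 ab.
by move=> B2; apply/eqP; rewrite eqEcard cardsT T12 B2 leqnn andbT; apply: subsetT.
Qed.

Lemma path_tree (y1 y2 : T2) : y1 != y2 ->
  exists (V : {set T2}) (f : rel (T1 + T2)),
    [set y1; y2] \subset V /\ colored_tree (join g h) edge_join_color (inr @: V) f (fun n => n < k).
Proof.
move=> /paths[p /(rainbow_path_covered hsym colh.1) cov].
have ne : [set y1; y2] != set0 by apply/set0Pn; exists y1; rewrite !inE eqxx.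
have [V [f [sV t]]] := covered_colored colh cov ne.
exists V, (image_rel inr f); split=> //.
by apply: (colored_tree_image (tau := id) inr_inj _ _ _ _ t).
Qed.

Let Jsym := join_sym gsym hsym.

Lemma edge_join_covered_ggh (z : T2) :
  covered (join g h) edge_join_color (inr z |: inl @: [set a; b]).
Proof.
apply: covered_sub (covered_leaves Jsym edge_join_color_sym
  (r := inr z) (es := [:: (inr z, inl a); (inr z, inl b)]) _ _); first subset_explicit.
- by rewrite /= !inE eqxx; simpl_sum_eq; rewrite orbF eq_sym ab.
- by rewrite /= eqxx eq_sym ab /= inE; lia.
Qed.

Lemma edge_join_covered_ghh (x : T1) (y1 y2 : T2) : y1 != y2 ->
  covered (join g h) edge_join_color (inl x |: inr @: [set y1; y2]).
Proof.
move=> y12; have [V [f [sV t]]] := path_tree y12.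
have y1V := imset_f (@inr T1 T2) (subsetP sV y1 (setU11 _ _)).
apply: (covered_leaf Jsym edge_join_color_sym (imsetS inr sV) t y1V).
- by apply/imsetP=> -[].
- by [].
- by rewrite /= -ltnNge leq_addr.
Qed.

(* {y1, y2, y3}: if y3 is off the path from y1 to y2, reach it by the
   detour y1 - b - a - y3 with colours k + 1, k + 2, k. *)
Lemma edge_join_covered_hhh (y1 y2 y3 : T2) : y1 != y2 ->
  covered (join g h) edge_join_color (inr @: [set y1; y2; y3]).
Proof.
move=> y12; have [V [f [sV t]]] := path_tree y12.
have y12V y : y \in [set y1; y2] -> (inr y : T1 + T2) \in inr @: V.
  by move=> /(subsetP sV); apply: imset_f.
have [y3V|y3V] := boolP (y3 \in V).
  apply: colored_tree_covered t; apply: imsetS; apply/subsetP=> y.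
  by rewrite !inE -orbA => /or3P[]/eqP-> //; apply: (subsetP sV); rewrite !inE eqxx ?orbT.
have nl x : (inl x : T1 + T2) \notin inr @: V by apply/imsetP=> -[].
have y3n : (inr y3 : T1 + T2) \notin inr @: V by rewrite (mem_imset _ _ inr_inj).
have [|||V' [f' [sVV' sub t']]] := colored_tree_grow Jsym edge_join_color_sym
  (es := [:: (inr y1, inl b); (inl b, inl a); (inl a, inr y3)]) t.
- rewrite /= !in_setU1 y12V ?setU11 // gba !(negbTE (nl _)) (negbTE y3n) eqxx /=.
  by simpl_sum_eq; rewrite orbF ab eqxx.
- by rewrite /= eq_sym ab eqxx /= !inE; lia.
- by rewrite /= eq_sym ab eqxx /=; lia.
apply: colored_tree_covered t'; apply/subsetP=> _ /imsetP[y + ->].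
rewrite !inE -orbA => /or3P[]/eqP->; last by apply: sub; rewrite !inE eqxx ?orbT.
all: by apply: (subsetP sVV'); apply: y12V; rewrite !inE eqxx ?orbT.
Qed.

Lemma edge_join_rx3 : rx3_ok (join g h) (k + 3).
Proof.
exists edge_join_color; split; first exact: edge_join_coloring.
apply: (sum_set3_cases (P := covered (join g h) edge_join_color)).
- by move=> A A3; have := max_card A; rewrite A3 T12.
- by move=> A z /two_vertices->; apply: edge_join_covered_ggh.
- by move=> x B /eqP/cards2P[y1 [y2 [y12 ->]]]; apply: edge_join_covered_ghh.
- by move=> B /set3_elements[y1 [y2 [y3 [y12 _ _ ->]]]]; apply: edge_join_covered_hhh.
Qed.
End JoinWithEdge.

Lemma join_rx3_edge (T1 T2 : finType) (g : rel T1) (h : rel T2) k :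
  simple_graph g -> connected g -> simple_graph h -> #|T1| = 2 ->
  rc_ok h k -> rx3_ok (join g h) (k + 3).
Proof.
move=> [girr gsym] gc [_ hsym] T12 [ch [colh paths]].
have /cards2P[a [b [ab _]]] : #|[set: T1]| == 2 by rewrite cardsT T12.
have gba : g b a.
  have /connectP[[|w p] /= gbw eba] := gc b a; first by rewrite eba eqxx in ab.
  case/andP: gbw => gbw _; case: (eqVneq w a) gbw => [-> //|wa gbw].
  have bw : b != w by apply: contraTneq gbw => <-; rewrite girr.
  have aw : a != w by rewrite eq_sym.
  by have := max_card [set a; b; w]; rewrite cards3 // T12.
exact: edge_join_rx3 gsym hsym ab gba T12 colh paths.
Qed.

Lemma rainbow_tree_card (T : finType) (g : rel T) (c : T -> T -> nat) k (V : {set T}) (f : rel T) :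
  irreflexive g -> coloring g c k -> rainbow_tree g c V f -> 0 < #|V| -> #|V| <= k.+1.
Proof.
move=> girr [_ ck] [[fg _] _ _ fcard finj] V0.
pose E := [set e : T * T | f e.1 e.2].
pose code (e : T * T) := (c e.1 e.2, enum_rank e.1 < enum_rank e.2).
have code_inj : {in enum E &, injective code}.
  move=> [x y] [u v]; rewrite !mem_enum !inE /= => fxy fuv [ceq oeq].
  case: (finj _ _ _ _ fxy fuv ceq) => [[-> ->] //|[ex ey]]; subst x y.
  case: (ltngtP (enum_rank u) (enum_rank v)) oeq => // /val_inj/enum_rank_inj uv _.
  by move: fuv; rewrite uv => /fg; rewrite girr.
have code_sub : {subset map code (enum E) <= [seq (n, b) | n <- iota 0 k, b <- [:: false; true]]}.
  move=> q /mapP[[x y]]; rewrite mem_enum inE => /fg/ck cxy ->.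
  by apply: (allpairs_f pair); rewrite ?mem_iota ?cxy //; case: (_ < _).
have := uniq_leq_size (etrans (map_inj_in_uniq code_inj) (enum_uniq _)) code_sub.
by rewrite size_map -cardE fcard size_allpairs size_iota /=; lia.
Qed.

Lemma rainbow_tree_one_color (T : finType) (g : rel T) (c : T -> T -> nat) n
    (V : {set T}) (f : rel T) :
  rainbow_tree g c V f -> (forall x y, f x y -> c x y = n) -> #|[set e : T * T | f e.1 e.2]| <= 2.
Proof.
move=> [_ _ _ _ finj] cn; have [->|/set0Pn[[x0 y0]]] := eqVneq [set e : T * T | f e.1 e.2] set0.
  by rewrite cards0.
rewrite inE /= => e0; apply: leq_trans (subset_leq_card (_ : _ \subset [set (x0, y0); (y0, x0)])) _.
  apply/subsetP=> -[x y]; rewrite !inE /= => fxy.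
  by have [[-> ->]|[-> ->]] := finj _ _ _ _ fxy e0 (etrans (cn _ _ fxy) (esym (cn _ _ e0)));
    rewrite eqxx ?orbT.
by rewrite cards2; case: (_ != _).
Qed.

Section Ramsey.
Variables (T : finType) (r : rel T).
Hypothesis rsym : symmetric r.

Definition monochromatic (S : {set T}) (b : bool) : Prop :=
  {in S &, forall x y, x != y -> r x y = b}.

Lemma monochromatic3 (x y z : T) b :
  r x y = b -> r x z = b -> r y z = b -> monochromatic [set x; y; z] b.
Proof.
move=> xy xz yz u v; rewrite !inE -!orbA => /or3P[]/eqP-> /or3P[]/eqP->;
  by rewrite ?eqxx // => _; rewrite // rsym.
Qed.

(* If at least three vertices u see v with the same value r v u = b, then
   either two of them form with v a b-triangle, or they form a ~~b-triangle. *)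
Lemma monochromatic_triangle_from (v : T) (b : bool) (X : {set T}) :
  (forall u, u \in X -> (u != v) && (r v u == b)) -> 3 <= #|X| ->
  exists (S : {set T}) (b' : bool), #|S| = 3 /\ monochromatic S b'.
Proof.
move=> HX /pick3[x [y [z [xX yX zX [xy xz yz]]]]].
case/andP: (HX _ xX) (HX _ yX) (HX _ zX) => [xv /eqP vx] /andP[yv /eqP vy] /andP[zv /eqP vz].
have triangle_with_v u w : u != w -> u != v -> w != v -> r v u = b -> r v w = b -> r u w = b ->
    exists (S : {set T}) (b' : bool), #|S| = 3 /\ monochromatic S b'.
  move=> uw uv wv vu vw uw'; exists [set v; u; w], b; split; last exact: monochromatic3.
  by apply: cards3; rewrite // eq_sym.
have [exy|nxy] := eqVneq (r x y) b; first exact: triangle_with_v xy xv yv vx vy exy.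
have [exz|nxz] := eqVneq (r x z) b; first exact: triangle_with_v xz xv zv vx vz exz.
have [eyz|nyz] := eqVneq (r y z) b; first exact: triangle_with_v yz yv zv vy vz eyz.
exists [set x; y; z], (~~ b); split; first exact: cards3.
by apply: monochromatic3; [move: nxy|move: nxz|move: nyz]; case: (r _ _); case: (b).
Qed.

(* Among the >= 5 other vertices, at least three see v with the same value. *)
Lemma ramsey33 : 6 <= #|T| -> exists (S : {set T}) (b : bool), #|S| = 3 /\ monochromatic S b.
Proof.
move=> T6; have /card_gt0P[v _] : 0 < #|T| by lia.
pose N b := [set u | (u != v) && (r v u == b)].
have cN : #|N true| + #|N false| = #|T| - 1.
  rewrite subn1 -(cardsC1 v) -(cardsID [set u | r v u] [set~ v]).
  by congr (_ + _); apply: eq_card => u; rewrite !inE; case: (r v u); rewrite ?andbT ?andbF.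
have [b Nb] : exists b, 3 <= #|N b|.
  by case: (leqP 3 #|N true|) => ?; [exists true|exists false; lia].
by apply: (@monochromatic_triangle_from v b (N b)) => // u; rewrite inE.
Qed.
End Ramsey.

(* With at most two colours, the tree covering a monochromatic triangle of the
   relation "colour 0" would span exactly that triangle and use one colour. *)
Lemma tree_colors_ge3 (T : finType) (g : rel T) (c : T -> T -> nat) k :
  simple_graph g -> 6 <= #|T| -> coloring g c k ->
  (forall S : {set T}, #|S| = 3 -> covered g c S) -> 3 <= k.
Proof.
move=> [girr _] T6 col cov; rewrite leqNgt; apply/negP=> k3.
have rsym : symmetric (fun x y => c x y == 0) by move=> x y; rewrite col.1.
have [S [b [S3 mono]]] := ramsey33 rsym T6.
have [V [f [sSV t]]] := cov S S3.
have VS : V = S.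
  have V0 : 0 < #|V| by rewrite (leq_trans _ (subset_leq_card sSV)) ?S3.
  have V3 : #|V| <= 3 by apply: leq_trans (rainbow_tree_card girr col t V0) k3.
  by apply/eqP; rewrite eq_sym eqEcard sSV S3.
have one_color u w : f u w -> c u w = ~~ b :> nat.
  case: t => [[fg _] fV _ _ _] fuw; have /andP[uS wS] := fV _ _ fuw; rewrite VS in uS wS.
  have uw : u != w by apply: contraTneq (fg _ _ fuw) => ->; rewrite girr.
  rewrite -(mono _ _ uS wS uw); move: (col.2 _ _ (fg _ _ fuw)) k3.
  by case: (c u w) => [|[|n]] //=; lia.
have := rainbow_tree_one_color t one_color.
by case: t => _ _ _ -> _; rewrite VS S3.
Qed.

(* Adding edges does not increase rx3: if phi is a bijection mapping g into g',
   a good colouring of g, extended by colour 0 on the new edges, is good for g'.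
   (0 is a legal colour: a tree on >= 3 vertices forces k >= 2.) *)
Lemma rx3_ok_spanning (T T' : finType) (g : rel T) (g' : rel T') (phi : T -> T') (psi : T' -> T) k :
  cancel phi psi -> cancel psi phi -> simple_graph g -> 3 <= #|T| ->
  (forall x y, g x y -> g' (phi x) (phi y)) -> rx3_ok g k -> rx3_ok g' k.
Proof.
move=> phiK psiK [girr gsym] T3 hom [c [[cs ck] cov]].
have k0 : 0 < k.
  have [|x [y [z [_ _ _ [xy xz yz]]]]] := pick3 (X := [set: T]); first by rewrite cardsT.
  have [V [f [sSV t]]] := cov _ (cards3 xy xz yz).
  have V3 : 3 <= #|V| by rewrite -(cards3 xy xz yz); apply: subset_leq_card.
  have V0 : 0 < #|V| by lia.
  by have := rainbow_tree_card girr (conj cs ck) t V0; lia.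
pose c' u v := if g (psi u) (psi v) then c (psi u) (psi v) else 0.
exists c'; split.
  split=> [u v|u v _]; first by rewrite /c' gsym cs.
  by rewrite /c'; case: ifP => // /ck.
move=> S' S3'; have S3 : #|psi @: S'| = 3 by rewrite card_imset //; apply: can_inj psiK.
have -> : S' = phi @: (psi @: S') by rewrite -imset_comp (eq_imset _ psiK) imset_id.
apply: (covered_image (tau := id) (can_inj phiK) hom _ _ (cov _ S3)) => // x y gxy.
by rewrite /c' !phiK gxy.
Qed.

Lemma Kbip_simple s t : simple_graph (Kbip s t).
Proof. by split; [case|case=> ?; case]. Qed.

Lemma Kbip_connected s t : 0 < s -> 0 < t -> connected (Kbip s t).
Proof.
move=> s0 t0 [i|j] [i'|j'].
- by apply: (@connect_trans _ _ (inr (Ordinal t0))); apply: connect1.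
- exact: connect1.
- exact: connect1.
- by apply: (@connect_trans _ _ (inl (Ordinal s0))); apply: connect1.
Qed.

Lemma kbip_to_join (T1 T2 : finType) (g : rel T1) (h : rel T2) k :
  3 <= #|T1| + #|T2| -> rx3_ok (Kbip #|T1| #|T2|) k -> rx3_ok (join g h) k.
Proof.
move=> T3; pose phi (u : 'I_#|T1| + 'I_#|T2|) : T1 + T2 :=
  match u with inl i => inl (enum_val i) | inr j => inr (enum_val j) end.
pose psi (u : T1 + T2) : 'I_#|T1| + 'I_#|T2| :=
  match u with inl x => inl (enum_rank x) | inr y => inr (enum_rank y) end.
apply: (rx3_ok_spanning (phi := phi) (psi := psi) _ _ (Kbip_simple _ _)).
- by case=> i /=; rewrite enum_valK.
- by case=> x /=; rewrite enum_rankK.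
- by rewrite card_sum !card_ord.
- by case=> ?; case.
Qed.

Section BalancedBipartite.
Variable s : nat.

Definition order_color (i j : nat) : nat := (j <= i) + (j < i).

Definition kbip_color (u v : 'I_s + 'I_s) : nat :=
  match u, v with
  | inl i, inr j | inr j, inl i => order_color i j
  | _, _ => 0
  end.

Lemma kbip_color_sym u v : kbip_color u v = kbip_color v u.
Proof. by case: u; case: v. Qed.

Lemma kbip_coloring : coloring (Kbip s s) kbip_color 3.
Proof.
split; first exact: kbip_color_sym.
by case=> i; case=> j //= _; rewrite /order_color; lia.
Qed.

Let Ksym := (Kbip_simple s s).2.

(* Equality of ordinals is equality of their values, so that the side
   conditions of the explicit trees below reduce to linear arithmetic. *)
Lemma ord_eqE (i j : 'I_s) : (i == j) = (val i == val j).
Proof. by []. Qed.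

Ltac side_conditions := rewrite /= ?inE ?eqxx; simpl_sum_eq; rewrite ?ord_eqE /order_color /=; lia.

Lemma kbip_covered_lll (i j l : 'I_s) : i < j -> j < l ->
  covered (Kbip s s) kbip_color (inl @: [set i; j; l]).
Proof.
move=> ij jl; apply: covered_sub (covered_leaves Ksym kbip_color_sym
  (r := inr j) (es := [:: (inr j, inl i); (inr j, inl j); (inr j, inl l)]) _ _);
[subset_explicit|side_conditions|side_conditions].
Qed.

Lemma kbip_covered_llr (i j z : 'I_s) : i < j ->
  covered (Kbip s s) kbip_color (inr z |: inl @: [set i; j]).
Proof.
move=> ij; have [zi|iz] := ltnP z i.
  apply: covered_sub (covered_leaves Ksym kbip_color_sym
    (r := inr j) (es := [:: (inr j, inl j); (inr j, inl i); (inl i, inr z)]) _ _);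
  [subset_explicit|side_conditions|side_conditions].
have [jz|zj] := ltnP j z.
  apply: covered_sub (covered_leaves Ksym kbip_color_sym
    (r := inr i) (es := [:: (inr i, inl i); (inr i, inl j); (inl i, inr z)]) _ _);
  [subset_explicit|side_conditions|side_conditions].
apply: covered_sub (covered_leaves Ksym kbip_color_sym
  (r := inr z) (es := [:: (inr z, inl i); (inr z, inl j)]) _ _);
[subset_explicit|side_conditions|side_conditions].
Qed.

(* Exchanging the two sides reverses the colours n |-> 2 - n. *)
Definition side_swap (u : 'I_s + 'I_s) : 'I_s + 'I_s :=
  match u with inl i => inr i | inr j => inl j end.

Lemma covered_swap (A : {set 'I_s + 'I_s}) :
  covered (Kbip s s) kbip_color A -> covered (Kbip s s) kbip_color (side_swap @: A).
Proof.
have [_ bound] := kbip_coloring.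
apply: (covered_image (tau := fun n => 2 - n)).
- by apply: (can_inj (g := side_swap)); case.
- by case=> ?; case.
- by case=> i; case=> j //= _; rewrite /order_color; lia.
- by move=> x y u v /bound + /bound; lia.
Qed.

Lemma kbip_rx3_covered (S : {set 'I_s + 'I_s}) : #|S| = 3 -> covered (Kbip s s) kbip_color S.
Proof.
have llr (A : {set 'I_s}) z : #|A| = 2 -> covered (Kbip s s) kbip_color (inr z |: inl @: A).
  by move=> /ord_set2[i [j [ij ->]]]; apply: kbip_covered_llr.
apply: sum_set3_cases => [A /ord_set3[i [j [l [ij jl ->]]]]|A z /llr //|x B B2|B B3].
- exact: kbip_covered_lll.
- have -> : inl x |: inr @: B = side_swap @: (inr x |: inl @: B) by rewrite imsetU1 -imset_comp.
  exact/covered_swap/llr.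
- have -> : inr @: B = side_swap @: (inl @: B) by rewrite -imset_comp.
  apply: covered_swap; have [i [j [l [ij jl ->]]]] := ord_set3 B3; exact: kbip_covered_lll.
Qed.
End BalancedBipartite.

Lemma kbip_rx3 s : 3 <= s -> rx3 (Kbip s s) = 3.
Proof.
move=> s3; have ok3 : rx3_ok (Kbip s s) 3.
  by exists (@kbip_color s); split; [apply: kbip_coloring|apply: kbip_rx3_covered].
apply/eqP; rewrite eqn_leq least_nat_le //=.
have [c [col cov]] := least_natP (ex_intro _ 3 ok3).
by apply: tree_colors_ge3 (Kbip_simple s s) _ col cov; rewrite card_sum !card_ord; lia.
Qed.

Theorem theorem8 (T1 T2 : finType) (g : rel T1) (h : rel T2) :
  simple_graph g -> simple_graph h ->
  connected g -> connected h ->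
  ~ (complete g /\ complete h) ->
  #|T1| <= #|T2| -> 3 <= #|T2| ->
  [/\ (#|T1| = 1 -> rx3 (join g h) <= rx3 h + 1),
      (#|T1| = 2 ->
         rx3 (join g h) <= minn (rc h + 3) (rx3 (Kbip #|T1| #|T2|))),
      (3 <= #|T1| ->
         rx3 (join g h) <= minn (maxn (rx3 g) (rx3 h) + 1) (rx3 (Kbip #|T1| #|T2|)))
    & (3 <= #|T1| -> #|T1| = #|T2| ->
         rx3 (join g h) = rx3 (Kbip #|T1| #|T2|) /\ rx3 (Kbip #|T1| #|T2|) = 3)].
Proof.
move=> sg sh cg ch _ st t3.
have okg := least_natP (rx3_exists sg cg); have okh := least_natP (rx3_exists sh ch).
have okJ : 0 < #|T1| -> rx3_ok (join g h) (rx3 (Kbip #|T1| #|T2|)).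
  move=> s0; apply: kbip_to_join; first by lia.
  by apply: least_natP; apply: rx3_exists; [apply: Kbip_simple|apply: Kbip_connected; lia].
have le_K : 0 < #|T1| -> rx3 (join g h) <= rx3 (Kbip #|T1| #|T2|) by move/okJ/least_nat_le.
split=> [s1|s2|s3|s3 e].
- by rewrite addn1; apply/least_nat_le/join_rx3_single.
- rewrite leq_min le_K ?s2 // andbT; apply/least_nat_le/join_rx3_edge => //.
  exact: least_natP (rc_exists ch).
- by rewrite leq_min le_K 1?addn1 ?(least_nat_le (join_rx3_max sg sh s3 t3 okg okh)) //; lia.
- have K3 : rx3 (Kbip #|T1| #|T2|) = 3 by rewrite -e kbip_rx3.
  split=> //; apply/eqP; rewrite eqn_leq le_K; last by lia.
  have s0 : 0 < #|T1| by lia.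
  have [c [col cov]] := least_natP (ex_intro _ _ (okJ s0)).
  by rewrite K3 (tree_colors_ge3 (join_simple sg sh) _ col cov) // card_sum; lia.
Qed.
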